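(* Let $B_{\mathrm{lbl}}(x,y)=\sum_{i,j\ge0}2^{ij}\frac{x^iy^j}{i!\,j!}$, the exponential generating function for labelled bicoloured graphs, and let $T_{\mathrm{lbl}}(x,y)=\sum_{i,j\ge0}\tau_{i,j}\frac{x^iy^j}{i!\,j!}$, where $\tau_{i,j}$ is the number of edge sets $E\subseteq V_1\times V_2$ with $V_1=\{u_1,\dots,u_i\}$, $V_2=\{w_1,\dots,w_j\}$ fixed labelled sets such that $(V_1,V_2,E)$ is a tangle. Then \[T_{\mathrm{lbl}}(x,y)=e^{-x}+e^{-y}-1-B_{\mathrm{lbl}}(x,y)^{-1}.\]
   Context: A bicoloured graph is a triple $G=(V_1,V_2,E)$ with $V_1,V_2$ disjoint finite sets (ordered colour classes) and $E\subseteq V_1\times V_2$. For a vertex $u$ let $N(u)$ be its set of neighbours. $G$ is called a tangle if $|V_1|\ge2$, $|V_2|\ge2$, the graph on $V_2$ joining $a,b$ whenever neither of $N(a),N(b)$ contains the other is connected, and the graph on $V_1$ defined by the same rule is connected. (Equivalently, viewing $G$ as the poset on $V_1\cup V_2$ with $u<w$ iff $u\in V_1,w\in V_2$, $(u,w)\in E$, the whole poset is a single tangle with top $V_2$ and bottom $V_1$.) *)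

From mathcomp Require Import all_boot all_order all_algebra.
Set Implicit Arguments. Unset Strict Implicit. Unset Printing Implicit Defensive.
Import GRing.Theory Num.Theory.

Definition nbr1 (i j : nat) (E : {set 'I_i * 'I_j}) (u : 'I_i) : {set 'I_j} :=
  [set w | (u, w) \in E].
Definition nbr2 (i j : nat) (E : {set 'I_i * 'I_j}) (w : 'I_j) : {set 'I_i} :=
  [set u | (u, w) \in E].

Definition incomp (T U : finType) (N : T -> {set U}) : rel T :=
  fun a b => ~~ (N a \subset N b) && ~~ (N b \subset N a).

Definition connectedb (T : finType) (e : rel T) : bool :=
  [forall a, forall b, connect e a b].

Definition is_tangle (i j : nat) (E : {set 'I_i * 'I_j}) : bool :=
  [&& 2 <= i, 2 <= j, connectedb (incomp (nbr2 E)) & connectedb (incomp (nbr1 E))].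

Definition tau (i j : nat) : nat := #|[set E : {set 'I_i * 'I_j} | is_tangle E]|.

Local Open Scope ring_scope.

(* formal power series in x, y over rat: F i j = coefficient of x^i y^j *)
Definition series := nat -> nat -> rat.

Definition smul (F G : series) : series := fun i j =>
  \sum_(a < i.+1) \sum_(b < j.+1) F a b * G (i - a)%N (j - b)%N.

Definition sone : series := fun i j => if (i == 0%N) && (j == 0%N) then 1 else 0.

Definition B_lbl : series := fun i j => (2 ^ (i * j))%:R / (i`! * j`!)%:R.
Definition T_lbl : series := fun i j => (tau i j)%:R / (i`! * j`!)%:R.
Definition exp_negx : series := fun i j => if j == 0%N then (-1) ^+ i / (i`!)%:R else 0.
Definition exp_negy : series := fun i j => if i == 0%N then (-1) ^+ j / (j`!)%:R else 0.

(* Call a bicoloured graph nondegenerate when every vertex of V1 has a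
   neighbour and no vertex of V2 is adjacent to all of V1.  A nondegenerate
   graph with at least one vertex has exactly one tangle block: a pair (A, B)
   of subsets of V1 and V2 inducing a tangle, such that every vertex outside A
   is adjacent to all of B and no vertex of A is adjacent to a vertex outside
   B; the edges between V1 \ A and V2 \ B are arbitrary.  The block is made of
   the incomparability component of a vertex of V2 with a largest
   neighbourhood and that of a vertex of V1 with a smallest one.  Hence there
   are sum_(k,l) C(i,k) C(j,l) tau_(k,l) 2^((i-k)(j-l)) nondegenerate graphs
   (plus one when i = j = 0), and inclusion-exclusion on the two defining
   conditions gives
     (2^j - 1)^i + (2^i - 1)^j = 2^(ij) + [i = j = 0] + sum_(k,l) ...,
   which is the coefficient of x^i y^j / (i! j!) in
   B_lbl (e^-x + e^-y - 1 - T_lbl) = 1.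
   Transposing a graph and complementing its edges exchanges the colour
   classes and preserves both incomparability relations, so every argument is
   carried out for one colour class only. *)

From mathcomp Require Import all_boot all_order all_algebra.
From mathcomp Require Import ring zify.
Import GRing.Theory Num.Theory.
Set Implicit Arguments. Unset Strict Implicit. Unset Printing Implicit Defensive.

(** * Finite sets and sums *)

Lemma setC_eq0 (T : finType) (X : {set T}) : (~: X == set0) = (X == setT).
Proof. by rewrite -setCT (inj_eq (@setC_inj _)). Qed.

Lemma setC_eqT (T : finType) (X : {set T}) : (~: X == setT) = (X == set0).
Proof. by rewrite -setC0 (inj_eq (@setC_inj _)). Qed.

Lemma leq_cardsC (T : finType) (X Y : {set T}) : (#|~: X| <= #|~: Y|) = (#|Y| <= #|X|).
Proof. by move: (cardsC X) (cardsC Y) => cX cY; apply/idP/idP => le; lia. Qed.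

Lemma cardsC_ord n (A : {set 'I_n}) : #|~: A| = (n - #|A|)%N.
Proof. by have := cardsC A; rewrite card_ord; lia. Qed.

Lemma subset_preimsetE (K T : finType) (h : K -> T) (S S' : {set T}) :
  (h @^-1: S \subset h @^-1: S') = (S :&: [set x in codom h] \subset S').
Proof.
apply/subsetP/subsetP => [sub x /setIP[xS] | sub y].
  by rewrite inE => /codomP[y def_x]; move: (sub y); rewrite !inE -def_x; apply.
by rewrite !inE => hyS; apply: sub; rewrite !inE hyS codom_f.
Qed.

Lemma codom_enum_val (T : finType) (A : {set T}) : codom (@enum_val T A) =i A.
Proof.
move=> x; apply/codomP/idP => [[i ->] | xA]; first exact: enum_valP.
by exists (enum_rank_in xA x); rewrite enum_rankK_in.
Qed.

Lemma card_in_bij (X Y : finType) (P : {set X}) (Q : {set Y}) (f : X -> Y) (g : Y -> X) :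
  {in P, forall x, f x \in Q} -> {in Q, forall y, g y \in P} ->
  {in P, cancel f g} -> {in Q, cancel g f} -> #|P| = #|Q|.
Proof.
move=> fPQ gQP fK gK; rewrite -(card_in_imset (can_in_inj fK)).
apply: eq_card => y; apply/imsetP/idP => [[x xP ->] | yQ]; first exact: fPQ.
by exists (g y); rewrite ?gK ?gQP.
Qed.

Lemma card_sets (T : finType) : #|{set T}| = 2 ^ #|T|.
Proof. by rewrite -cardsT -card_powerset; apply: eq_card => X; rewrite !inE subsetT. Qed.

Lemma sum_nat_of_bool (T : finType) (P : pred T) : \sum_(x : T) (P x : nat) = #|[set x | P x]|.
Proof. by rewrite -sum1dep_card [RHS]big_mkcond. Qed.

Lemma sum_set_card (T : finType) (F : nat -> nat) :
  \sum_(A : {set T}) F #|A| = \sum_(k < #|T|.+1) 'C(#|T|, k) * F k.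
Proof.
rewrite (partition_big (fun A : {set T} => @inord #|T| #|A|) xpredT) //=.
apply: eq_big => // k _; rewrite -card_draws -sum1dep_card big_distrl /=.
apply: eq_big => [A | A /eqP <-]; last by rewrite mul1n inordK // ltnS max_card.
by rewrite -val_eqE /= inordK // ltnS max_card.
Qed.

(** * Incomparability graphs *)

Section Connectivity.
Variable T : finType.
Implicit Types (e : rel T) (C : {set T}).

Definition connected_on e C := [forall a in C, forall b in C, connect e a b].

Definition component e x : {set T} := [set y | connect e x y].

Lemma connected_onP e C :
  reflect {in C &, forall a b, connect e a b} (connected_on e C).
Proof.
apply: (iffP forall_inP) => [h a b aC bC | h a aC].
  by move/forall_inP: (h a aC); apply.
by apply/forall_inP => b bC; apply: h.
Qed.

Lemma eq_connected_on e e' C : e =2 e' -> connected_on e C = connected_on e' C.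
Proof.
move=> ee'; apply/connected_onP/connected_onP => conn a b aC bC.
  by rewrite -(eq_connect ee') conn.
by rewrite (eq_connect ee') conn.
Qed.

Lemma connected_on_component e x : connect_sym e -> connected_on e (component e x).
Proof.
move=> sym_e; apply/connected_onP => a b; rewrite !inE => xa xb.
by apply: connect_trans xb; rewrite sym_e.
Qed.

Lemma connected_on_neighbour e C x :
  1 < #|C| -> x \in C -> connected_on e C -> exists y, e x y.
Proof.
case/card_gt1P => a [b [aC bC neq_ab]] xC /connected_onP conn.
have [y yC neq_yx] : exists2 y, y \in C & y != x.
  by case: (eqVneq a x) => [<-|]; [exists b; rewrite // eq_sym | exists a].
case/connectP: (conn x y xC yC) => [[|z p]] /=; last by case/andP=> exz _ _; exists z.
by move=> _ eq_y; rewrite eq_y eqxx in neq_yx.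
Qed.

Lemma connect_invariant e (P : pred T) x y :
  (forall z z', connect e x z -> e z z' -> P z = P z') -> connect e x y -> P x = P y.
Proof.
move=> inv /connectP[p ep ->]; elim/last_ind: p ep => //= p z IHp.
rewrite rcons_path last_rcons => /andP[ep ez]; rewrite (IHp ep).
by apply: inv ez; apply/connectP; exists p.
Qed.

End Connectivity.

Arguments connected_onP {T e C}.

Lemma connectedb_relabel (K T : finType) (h : K -> T) (e : rel T) (e' : rel K)
    (C : {set T}) :
  symmetric e -> injective h -> codom h =i C -> closed e C ->
  (forall x y, e' x y = e (h x) (h y)) -> connectedb e' = connected_on e C.
Proof.
move=> sym_e inj_h codom_h closedC e'E.
have sym_e' : symmetric e' by move=> x y; rewrite !e'E sym_e.
have subC : C \subset codom h by apply/subsetP => x; rewrite codom_h.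
have base : rel_base h e e' [predC C] by move=> x y _; rewrite e'E.
have adj := strict_adjunction (sym_connect_sym sym_e') closedC inj_h subC base.
have transfer x y : connect e' x y = connect e (h x) (h y).
  by apply: (rel_functor adj); rewrite -codom_h codom_f.
apply/forallP/connected_onP => [conn a b | conn x]; last first.
  by apply/forallP => y; rewrite transfer conn // -codom_h codom_f.
rewrite -!codom_h => /codomP[x ->] /codomP[y ->].
by rewrite -transfer; apply: (forallP (conn x)).
Qed.

Section Incomparability.
Variables (T U : finType) (N : T -> {set U}).
Local Notation R := (incomp N).

Lemma incomp_sym : symmetric R.
Proof. by move=> a b; rewrite /incomp andbC. Qed.

Lemma connect_incomp_sym : connect_sym R.
Proof. exact/sym_connect_sym/incomp_sym. Qed.

Lemma incompN a b : ~~ R a b = (N a \subset N b) || (N b \subset N a).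
Proof. by rewrite /incomp negb_and !negbK orbC. Qed.

Lemma incomp_eq_nbr a b : N a = N b -> ~~ R a b.
Proof. by move=> eq_ab; rewrite incompN eq_ab subxx. Qed.

Lemma comparable_off_component x y z :
  ~~ connect R x y -> connect R x z -> ~~ R z y.
Proof. by move=> nxy xz; apply: contra nxy => /connect1; apply: connect_trans. Qed.

(* y is comparable to every vertex of the component, so whether N y lies below
   is constant along the component; at x0 maximality decides it. *)
Lemma nbr_sub_component_of_max x0 y z :
  (forall t, #|N t| <= #|N x0|) -> ~~ connect R x0 y -> connect R x0 z ->
  N y \subset N z.
Proof.
move=> x0_max nx0y x0z.
have step a b : connect R x0 a -> R a b -> N y \subset N a -> N y \subset N b.
  move=> x0a Rab sya.
  have := comparable_off_component nx0y (connect_trans x0a (connect1 Rab)).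
  rewrite incompN => /orP[sby|//].
  by move: Rab; rewrite /incomp (subset_trans sby sya) andbF.
rewrite -(connect_invariant (P := fun t => N y \subset N t) _ x0z); last first.
  move=> a b x0a Rab; apply/idP/idP; first exact: step.
  by apply: step; [exact: connect_trans x0a (connect1 Rab) | rewrite incomp_sym].
have := comparable_off_component nx0y (connect0 R x0).
rewrite incompN => /orP[sx0y|//]; apply/negPn/negP => nsyx0.
have /proper_card : N x0 \proper N y by rewrite properE sx0y.
by rewrite ltnNge x0_max.
Qed.

End Incomparability.

(** * Tangle blocks *)

Section Bicoloured.
Variables T1 T2 : finType.
Implicit Types (E : {set T1 * T2}) (A : {set T1}) (B : {set T2}) (u : T1) (w : T2).

Definition nbhd1 E u : {set T2} := [set w | (u, w) \in E].
Definition nbhd2 E w : {set T1} := [set u | (u, w) \in E].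

Definition nondegenerate E :=
  [forall u, nbhd1 E u != set0] && [forall w, nbhd2 E w != setT].

Definition separated E A B :=
  (setX (~: A) B \subset E) && [disjoint setX A (~: B) & E].

Definition tangle_on E A B :=
  [&& 2 <= #|A|, 2 <= #|B|, connected_on (incomp (nbhd1 E)) A
    & connected_on (incomp (nbhd2 E)) B].

Definition tangle_block E A B := separated E A B && tangle_on E A B.

Definition tcompl E : {set T2 * T1} := [set p | (p.2, p.1) \notin E].

Lemma in_nbhd1 E u w : (w \in nbhd1 E u) = ((u, w) \in E).
Proof. by rewrite inE. Qed.

Lemma in_nbhd2 E u w : (u \in nbhd2 E w) = ((u, w) \in E).
Proof. by rewrite inE. Qed.

Lemma separatedP E A B :
  reflect ((forall u w, u \notin A -> w \in B -> (u, w) \in E) /\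
           (forall u w, u \in A -> w \notin B -> (u, w) \notin E))
          (separated E A B).
Proof.
apply: (iffP andP) => [[/subsetP sub /pred0P dis] | [inE_ outE]]; split.
- by move=> u w uA wB; apply: sub; rewrite in_setX !inE uA.
- by move=> u w uA wB; move: (dis (u, w)); rewrite /= in_setX !inE uA wB => /negbT.
- by apply/subsetP => -[u w]; rewrite in_setX !inE => /andP[]; exact: inE_.
- apply/pred0P => -[u w] /=; rewrite in_setX !inE.
  by case: (u \in A) (w \in B) (outE u w) => -[] //= /(_ isT isT) /negbTE.
Qed.

Section Separated.
Variables (E : {set T1 * T2}) (A : {set T1}) (B : {set T2}).
Hypothesis sepE : separated E A B.

Lemma separated_nbhd2 w w' : w \in B -> w' \notin B -> nbhd2 E w' \subset nbhd2 E w.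
Proof.
case/separatedP: sepE => inE_ outE wB w'B; apply/subsetP => u; rewrite !in_nbhd2.
case: (boolP (u \in A)) => [uA | uA _]; last exact: inE_.
by rewrite (negbTE (outE _ _ uA w'B)).
Qed.

Lemma separated_closed2 : closed (incomp (nbhd2 E)) B.
Proof.
apply: intro_closed; first exact: connect_incomp_sym.
move=> w w' + wB; apply: contraTT => w'B.
by rewrite incompN (separated_nbhd2 wB w'B) orbT.
Qed.

End Separated.

Lemma tangle_block_nbhd1_neq0 E A B u : tangle_block E A B -> nbhd1 E u != set0.
Proof.
case/andP=> /separatedP[inE_ _] /and4P[cardA cardB connA _].
case: (boolP (u \in A)) => [uA | uA].
  have [u' /andP[+ _]] := connected_on_neighbour cardA uA connA.
  by apply: contraNneq => ->; rewrite sub0set.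
have /card_gt0P[w wB] : 0 < #|B| by apply: ltnW.
by apply/set0Pn; exists w; rewrite in_nbhd1 inE_.
Qed.

Lemma tangle_block_sub2 E A1 B1 A2 B2 :
  tangle_block E A1 B1 -> tangle_block E A2 B2 -> B1 \subset B2.
Proof.
case/andP=> sep1 /and4P[_ cardB1 _ connB1]; case/andP=> sep2 /and4P[_ cardB2 _ _].
apply/subsetP => w wB1; apply/negPn/negP => wB2.
have [w' Rww'] := connected_on_neighbour cardB1 wB1 connB1.
have /card_gt0P[v vB2] : 0 < #|B2| by apply: ltnW.
have vB1 : v \notin B1.
  apply: contraNN wB2 => vB1.
  by rewrite -(closed_connect (separated_closed2 sep2) (connected_onP connB1 v w vB1 wB1)).
have nbhd2_v x : x \in B1 -> x \notin B2 -> nbhd2 E x = nbhd2 E v.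
  by move=> xB1 xB2; apply/eqP; rewrite eqEsubset (separated_nbhd2 sep2 vB2 xB2)
                                                  (separated_nbhd2 sep1 xB1 vB1).
have w'B1 : w' \in B1 by rewrite -(separated_closed2 sep1 Rww').
have w'B2 : w' \notin B2 by rewrite -(separated_closed2 sep2 Rww').
by move: Rww'; apply/negP/incomp_eq_nbr; rewrite !nbhd2_v.
Qed.

Section MaximalComponent.
Variables (E : {set T1 * T2}) (w0 : T2).
Hypothesis w0_max : forall w, #|nbhd2 E w| <= #|nbhd2 E w0|.
Local Notation C2 := (component (incomp (nbhd2 E)) w0).

Lemma nbhd1_sub_or_sup u : (nbhd1 E u \subset C2) || (C2 \subset nbhd1 E u).
Proof.
case: (boolP (nbhd1 E u \subset C2)) => //= /subsetPn[w uw wC2].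
apply/subsetP => w' w'C2; rewrite inE in wC2; rewrite inE in w'C2.
rewrite in_nbhd1 -in_nbhd2; apply: (subsetP (nbr_sub_component_of_max w0_max wC2 w'C2)).
by rewrite in_nbhd2 -in_nbhd1.
Qed.

Lemma exists_nbhd1_proper : nbhd2 E w0 != setT -> exists u, nbhd1 E u \proper C2.
Proof.
rewrite eqEsubset subsetT /= => /subsetPn[u _]; rewrite in_nbhd2 => uw0; exists u.
have nsup : ~~ (C2 \subset nbhd1 E u).
  by apply/subsetPn; exists w0; rewrite ?in_nbhd1 // inE.
by move: (nbhd1_sub_or_sup u); rewrite properE nsup (negbTE nsup) andbT orbF.
Qed.

Lemma card_max_component : nondegenerate E -> 2 <= #|C2|.
Proof.
case/andP=> /forallP ne0 /forallP ntot; have [u ltC2] := exists_nbhd1_proper (ntot w0).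
by apply: leq_trans (proper_card ltC2); rewrite ltnS card_gt0.
Qed.

(* The vertices not adjacent to all of C2 have their neighbourhoods inside C2
   and form a union of components, which contains u0 by minimality. *)
Lemma min_component_nbhd1_sub u0 u :
  nbhd2 E w0 != setT -> (forall v, #|nbhd1 E u0| <= #|nbhd1 E v|) ->
  u \in component (incomp (nbhd1 E)) u0 -> nbhd1 E u \subset C2.
Proof.
move=> ntot u0_min; pose I := [set v | ~~ (C2 \subset nbhd1 E v)].
have nbhd1_I v : v \in I -> nbhd1 E v \subset C2.
  by rewrite inE; case/orP: (nbhd1_sub_or_sup v) => // ->.
have closed_I : closed (incomp (nbhd1 E)) I.
  apply: intro_closed; first exact: connect_incomp_sym.
  move=> a b + aI; apply: contraTT; rewrite inE negbK => supb.
  by rewrite incompN (subset_trans (nbhd1_I a aI) supb).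
have u0I : u0 \in I.
  have [v ltC2] := exists_nbhd1_proper ntot; rewrite inE; apply/negP => sup0.
  by have := leq_trans (proper_card ltC2) (subset_leq_card sup0); rewrite ltnNge u0_min.
by rewrite inE => u0u; apply: nbhd1_I; rewrite -(closed_connect closed_I u0u).
Qed.

End MaximalComponent.

End Bicoloured.

Section Duality.
Variables T1 T2 : finType.
Implicit Types (E : {set T1 * T2}) (A : {set T1}) (B : {set T2}).

Lemma tcomplK : cancel (@tcompl T1 T2) (@tcompl T2 T1).
Proof. by move=> E; apply/setP => -[u w]; rewrite !inE negbK. Qed.

Lemma nbhd1_tcompl E w : nbhd1 (tcompl E) w = ~: nbhd2 E w.
Proof. by apply/setP => u; rewrite !inE. Qed.

Lemma nbhd2_tcompl E u : nbhd2 (tcompl E) u = ~: nbhd1 E u.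
Proof. by apply/setP => w; rewrite !inE. Qed.

Lemma incomp1_tcompl E : incomp (nbhd1 (tcompl E)) =2 incomp (nbhd2 E).
Proof. by move=> w w'; rewrite /incomp !nbhd1_tcompl !setCS andbC. Qed.

Lemma incomp2_tcompl E : incomp (nbhd2 (tcompl E)) =2 incomp (nbhd1 E).
Proof. by move=> u u'; rewrite /incomp !nbhd2_tcompl !setCS andbC. Qed.

Lemma component1_tcompl E w :
  component (incomp (nbhd1 (tcompl E))) w = component (incomp (nbhd2 E)) w.
Proof. by apply/setP => w'; rewrite !inE (eq_connect (incomp1_tcompl E)). Qed.

Lemma component2_tcompl E u :
  component (incomp (nbhd2 (tcompl E))) u = component (incomp (nbhd1 E)) u.
Proof. by apply/setP => u'; rewrite !inE (eq_connect (incomp2_tcompl E)). Qed.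

Lemma separated_tcompl E A B : separated (tcompl E) B A = separated E A B.
Proof.
apply/separatedP/separatedP => -[inE_ outE]; split=> u w uA wB.
- by move: (outE w u wB uA); rewrite inE negbK.
- by move: (inE_ w u wB uA); rewrite inE.
- by rewrite inE /= outE.
- by rewrite inE negbK inE_.
Qed.

Lemma tangle_on_tcompl E A B : tangle_on (tcompl E) B A = tangle_on E A B.
Proof.
rewrite /tangle_on (eq_connected_on _ (incomp1_tcompl E)).
rewrite (eq_connected_on _ (incomp2_tcompl E)).
by case: (2 <= #|A|); case: (2 <= #|B|); rewrite //= andbC.
Qed.

Lemma tangle_block_tcompl E A B : tangle_block (tcompl E) B A = tangle_block E A B.
Proof. by rewrite /tangle_block separated_tcompl tangle_on_tcompl. Qed.

Lemma nondegenerate_tcompl E : nondegenerate (tcompl E) = nondegenerate E.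
Proof.
rewrite /nondegenerate andbC; congr (_ && _); apply: eq_forallb => x.
  by rewrite nbhd2_tcompl setC_eqT.
by rewrite nbhd1_tcompl setC_eq0.
Qed.

Lemma separated_closed1 E A B : separated E A B -> closed (incomp (nbhd1 E)) A.
Proof.
rewrite -separated_tcompl => /separated_closed2 closedA u u' Ruu'.
by apply: closedA; rewrite incomp2_tcompl.
Qed.

End Duality.

Section TangleBlock.
Variables T1 T2 : finType.
Implicit Types (E : {set T1 * T2}) (A : {set T1}) (B : {set T2}).

Lemma tangle_block_nondegenerate E A B : tangle_block E A B -> nondegenerate E.
Proof.
move=> blk; rewrite -nondegenerate_tcompl; apply/andP; split; apply/forallP => x.
  by rewrite -tangle_block_tcompl in blk; apply: tangle_block_nbhd1_neq0 blk.
by rewrite nbhd2_tcompl setC_eqT (tangle_block_nbhd1_neq0 _ blk).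
Qed.

Lemma tangle_block_unique E A1 B1 A2 B2 :
  tangle_block E A1 B1 -> tangle_block E A2 B2 -> A1 = A2 /\ B1 = B2.
Proof.
move=> blk1 blk2.
have blk1' : tangle_block (tcompl E) B1 A1 by rewrite tangle_block_tcompl.
have blk2' : tangle_block (tcompl E) B2 A2 by rewrite tangle_block_tcompl.
split; apply/eqP; rewrite eqEsubset.
  by rewrite (tangle_block_sub2 blk1' blk2') (tangle_block_sub2 blk2' blk1').
by rewrite (tangle_block_sub2 blk1 blk2) (tangle_block_sub2 blk2 blk1).
Qed.

End TangleBlock.

Section ExtremalComponents.
Variables (T1 T2 : finType) (E : {set T1 * T2}) (u0 : T1) (w0 : T2).
Hypotheses (ndE : nondegenerate E)
  (u0_min : forall u, #|nbhd1 E u0| <= #|nbhd1 E u|)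
  (w0_max : forall w, #|nbhd2 E w| <= #|nbhd2 E w0|).
Local Notation C1 := (component (incomp (nbhd1 E)) u0).
Local Notation C2 := (component (incomp (nbhd2 E)) w0).

Let u0_max' u : #|nbhd2 (tcompl E) u| <= #|nbhd2 (tcompl E) u0|.
Proof. by rewrite !nbhd2_tcompl leq_cardsC. Qed.

Let w0_min' w : #|nbhd1 (tcompl E) w0| <= #|nbhd1 (tcompl E) w|.
Proof. by rewrite !nbhd1_tcompl leq_cardsC. Qed.

Lemma extremal_components_separated : separated E C1 C2.
Proof.
case/andP: (ndE) => /forallP ne0 /forallP ntot.
apply/separatedP; split=> u w uC1 wC2.
  have ntot' : nbhd2 (tcompl E) u0 != setT by rewrite nbhd2_tcompl setC_eqT ne0.
  have wC2' : w \in component (incomp (nbhd1 (tcompl E))) w0 by rewrite component1_tcompl.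
  have := min_component_nbhd1_sub u0_max' ntot' w0_min' wC2'.
  rewrite component2_tcompl nbhd1_tcompl => /subsetP/(_ u)/contraNN/(_ uC1).
  by rewrite inE negbK in_nbhd2.
apply: contra wC2; rewrite -in_nbhd1; apply/subsetP.
exact (min_component_nbhd1_sub w0_max (ntot w0) u0_min uC1).
Qed.

Lemma extremal_components_tangle_on : tangle_on E C1 C2.
Proof.
apply/and4P; split; try exact/connected_on_component/connect_incomp_sym.
  rewrite -component2_tcompl; apply: card_max_component u0_max' _.
  by rewrite nondegenerate_tcompl.
exact: card_max_component w0_max ndE.
Qed.

End ExtremalComponents.

Lemma nondegenerate_tangle_block (T1 T2 : finType) (E : {set T1 * T2}) :
  (0 < #|T1|) || (0 < #|T2|) -> nondegenerate E -> exists A B, tangle_block E A B.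
Proof.
move=> inhabited ndE.
have [u1 [w1 _]] : exists (u1 : T1) (w1 : T2), True.
  case/andP: ndE => /forallP ne0 /forallP ntot.
  case/orP: inhabited => /card_gt0P[x _].
    by have /set0Pn[w _] := ne0 x; exists x, w.
  by move: (ntot x); rewrite eqEsubset subsetT => /subsetPn[u _ _]; exists u, x.
have [u0 _ u0_min] := arg_minnP (fun u => #|nbhd1 E u|) (isT : predT u1).
have [w0 _ w0_max] := arg_maxnP (fun w => #|nbhd2 E w|) (isT : predT w1).
have {}u0_min u : #|nbhd1 E u0| <= #|nbhd1 E u| by apply: u0_min.
have {}w0_max w : #|nbhd2 E w| <= #|nbhd2 E w0| by apply: w0_max.
exists (component (incomp (nbhd1 E)) u0), (component (incomp (nbhd2 E)) w0).
by rewrite /tangle_block (extremal_components_separated ndE u0_min w0_max)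
  (extremal_components_tangle_on ndE u0_min w0_max).
Qed.

(** * Counting tangle blocks *)

Section Relabel.
Variables (T1 T2 : finType) (A : {set T1}) (B : {set T2}).
Local Notation f1 := (@enum_val T1 A).
Local Notation f2 := (@enum_val T2 B).
Implicit Types (F : {set 'I_#|A| * 'I_#|B|}) (E G : {set T1 * T2}).

Definition relabel_pair (p : 'I_#|A| * 'I_#|B|) : T1 * T2 := (f1 p.1, f2 p.2).

Lemma relabel_pair_inj : injective relabel_pair.
Proof. by move=> [x y] [x' y'] [/enum_val_inj -> /enum_val_inj ->]. Qed.

Definition relabel E : {set 'I_#|A| * 'I_#|B|} := relabel_pair @^-1: E.

Lemma is_tangle_relabel E : separated E A B -> is_tangle (relabel E) = tangle_on E A B.
Proof.
move=> sepE; have /separatedP[inE_ outE] := sepE.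
have incomp1 x x' : incomp (nbr1 (relabel E)) x x' = incomp (nbhd1 E) (f1 x) (f1 x').
  have nbr1E y : nbr1 (relabel E) y = f2 @^-1: nbhd1 E (f1 y).
    by apply/setP => w; rewrite !inE.
  have nbhd1_sub y : nbhd1 E (f1 y) :&: [set w in codom f2] = nbhd1 E (f1 y).
    apply/setIidPl/subsetP => w; rewrite in_nbhd1 inE codom_enum_val.
    by apply: contraTT => /(outE _ _ (enum_valP y)).
  by rewrite /incomp !nbr1E !subset_preimsetE !nbhd1_sub.
have incomp2 y y' : incomp (nbr2 (relabel E)) y y' = incomp (nbhd2 E) (f2 y) (f2 y').
  have nbr2E z : nbr2 (relabel E) z = f1 @^-1: nbhd2 E (f2 z).
    by apply/setP => u; rewrite !inE.
  have sub_nbhd2 z z' : (nbhd2 E (f2 z) :&: [set u in codom f1] \subset nbhd2 E (f2 z')) =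
                        (nbhd2 E (f2 z) \subset nbhd2 E (f2 z')).
    apply/idP/idP => [sub | ]; last exact: subset_trans (subsetIl _ _).
    apply/subsetP => u uz; case: (boolP (u \in A)) => uA.
      by apply: (subsetP sub); rewrite in_setI uz inE codom_enum_val.
    by rewrite in_nbhd2 inE_ ?enum_valP.
  by rewrite /incomp !nbr2E !subset_preimsetE !sub_nbhd2.
rewrite /is_tangle /tangle_on; congr [&& _, _ & _]; rewrite andbC; congr (_ && _).
  apply: connectedb_relabel incomp1; first exact: incomp_sym.
  - exact: enum_val_inj.
  - exact: codom_enum_val.
  - exact: separated_closed1 sepE.
apply: connectedb_relabel incomp2; first exact: incomp_sym.
- exact: enum_val_inj.
- exact: codom_enum_val.
- exact: separated_closed2 sepE.
Qed.

Definition extend F G : {set T1 * T2} :=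
  relabel_pair @: F :|: setX (~: A) B :|: G.

Lemma relabel_pair_imset F u w : (u, w) \in relabel_pair @: F -> (u \in A) && (w \in B).
Proof. by case/imsetP => -[x y] _ [-> ->]; rewrite !enum_valP. Qed.

Lemma separated_extend F G : G \subset setX (~: A) (~: B) -> separated (extend F G) A B.
Proof.
move=> sG; apply/separatedP; split=> u w uA wB; rewrite !in_setU in_setX !inE uA.
  by rewrite wB orbT.
rewrite (negbTE wB) andbF orbF negb_or; apply/andP; split; apply/negP.
  by move/relabel_pair_imset; rewrite (negbTE wB) andbF.
by move/(subsetP sG); rewrite in_setX !inE uA.
Qed.

Lemma relabel_extend F G : G \subset setX (~: A) (~: B) -> relabel (extend F G) = F.
Proof.
move=> sG; apply/setP => -[x y]; rewrite inE !in_setU (mem_imset _ _ relabel_pair_inj).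
rewrite in_setX !inE /= enum_valP /=; case: (_ \in F) => //=.
by apply/negP => /(subsetP sG); rewrite in_setX !inE enum_valP.
Qed.

Lemma extend_setIX F G :
  G \subset setX (~: A) (~: B) -> extend F G :&: setX (~: A) (~: B) = G.
Proof.
move=> sG; apply/setP => -[u w]; rewrite /extend !in_setI !in_setU !in_setX !inE.
case: (boolP ((u, w) \in G)) => [/(subsetP sG) | _].
  by rewrite in_setX !inE => ->; rewrite orbT.
rewrite orbF; case: (boolP (u \in A)) => uA; rewrite ?andbF //=.
case: (boolP (w \in B)) => wB; rewrite ?andbF // orbF andbT.
by apply/negP => /relabel_pair_imset; rewrite (negbTE wB) andbF.
Qed.

Lemma extend_relabel E : separated E A B -> extend (relabel E) (E :&: setX (~: A) (~: B)) = E.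
Proof.
case/separatedP=> inE_ outE; apply/setP => -[u w].
rewrite !in_setU in_setI !in_setX !inE /=.
case: (boolP (u \in A)) => uA; case: (boolP (w \in B)) => wB /=;
  rewrite ?andbT ?andbF ?orbT ?orbF; last 2 first.
- by rewrite inE_.
- by apply/orb_idl => /relabel_pair_imset; rewrite (negbTE uA).
- have [x ->] : exists x, u = f1 x by apply/codomP; rewrite codom_enum_val.
  have [y ->] : exists y, w = f2 y by apply/codomP; rewrite codom_enum_val.
  by rewrite -[(f1 x, f2 y)]/(relabel_pair (x, y)) (mem_imset _ _ relabel_pair_inj) inE.
rewrite (negbTE (outE _ _ uA wB)).
by apply/negP => /relabel_pair_imset; rewrite (negbTE wB) andbF.
Qed.

Lemma card_tangle_blocks :
  #|[set E | tangle_block E A B]| = tau #|A| #|B| * 2 ^ (#|~: A| * #|~: B|).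
Proof.
have -> : tau #|A| #|B| * 2 ^ (#|~: A| * #|~: B|) =
          #|setX [set F : {set 'I_#|A| * 'I_#|B|} | is_tangle F]
                (powerset (setX (~: A) (~: B)))|.
  by rewrite cardsX card_powerset cardsX.
apply: (@card_in_bij _ _ _ _ (fun E => (relabel E, E :&: setX (~: A) (~: B)))
                             (fun FG => extend FG.1 FG.2)).
- move=> E; rewrite !inE subsetIr andbT => /andP[sepE tE].
  by rewrite is_tangle_relabel.
- move=> [F G]; rewrite !inE /= => /andP[tF sG].
  have sepFG := separated_extend F sG.
  by rewrite /tangle_block sepFG -(is_tangle_relabel sepFG) relabel_extend.
- by move=> E; rewrite inE => /andP[sepE _]; apply: extend_relabel.
by move=> [F G]; rewrite !inE /= => /andP[_ sG]; rewrite relabel_extend // extend_setIX.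
Qed.

End Relabel.

Lemma card_nbhd1_neq0 (T1 T2 : finType) :
  #|[set E : {set T1 * T2} | [forall u, nbhd1 E u != set0]]| = (2 ^ #|T2| - 1) ^ #|T1|.
Proof.
have -> : (2 ^ #|T2| - 1) ^ #|T1| =
          #|[set F : {ffun T1 -> {set T2}} | [forall u, F u != set0]]|.
  rewrite -card_sets subn1 -(cardsC1 set0) -card_ffun_on; apply: eq_card => F.
  by rewrite [in RHS]inE; apply/ffun_onP/forallP => F_ne0 u; have := F_ne0 u; rewrite !inE.
apply: (@card_in_bij _ _ _ _ (fun E => [ffun u => nbhd1 E u])
                             (fun F => [set p | p.2 \in F p.1])).
- by move=> E; rewrite !inE => /forallP ne0; apply/forallP => u; rewrite ffunE.
- move=> F; rewrite !inE => /forallP ne0; apply/forallP => u.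
  by congr (~~ (_ == _)): (ne0 u); apply/setP => w; rewrite !inE.
- by move=> E _; apply/setP => -[u w]; rewrite !inE ffunE inE.
- by move=> F _; apply/ffunP => u; rewrite ffunE; apply/setP => w; rewrite !inE.
Qed.

Section Counting.
Variables T1 T2 : finType.
Implicit Types (E : {set T1 * T2}) (A : {set T1}) (B : {set T2}).

Lemma card_nbhd2_neqT :
  #|[set E : {set T1 * T2} | [forall w, nbhd2 E w != setT]]| = (2 ^ #|T1| - 1) ^ #|T2|.
Proof.
rewrite -card_nbhd1_neq0.
apply: (card_in_bij (f := @tcompl T1 T2) (g := @tcompl T2 T1)) => [E | E | E _ | E _].
- by rewrite !inE => /forallP ntot; apply/forallP => w; rewrite nbhd1_tcompl setC_eq0.
- by rewrite !inE => /forallP ne0; apply/forallP => w; rewrite nbhd2_tcompl setC_eqT.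
- exact: tcomplK.
- exact: tcomplK.
Qed.

Lemma sum_tangle_blocks E :
  (0 < #|T1|) || (0 < #|T2|) ->
  \sum_(A : {set T1}) \sum_(B : {set T2}) (tangle_block E A B : nat) = nondegenerate E.
Proof.
move=> inhabited; case: (boolP (nondegenerate E)) => [ndE | nndE]; last first.
  rewrite big1 // => A _; rewrite big1 // => B _; apply/eqP; rewrite eqb0.
  by apply: contra nndE; apply: tangle_block_nondegenerate.
have [A0 [B0 blk0]] := nondegenerate_tangle_block inhabited ndE.
rewrite (bigD1 A0) //= (bigD1 B0) //= blk0 !big1 // => [A nA | B nB].
  rewrite big1 // => B _; apply/eqP; rewrite eqb0; apply: contra nA => blk.
  by have [-> _] := tangle_block_unique blk blk0.
apply/eqP; rewrite eqb0; apply: contra nB => blk.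
by have [_ ->] := tangle_block_unique blk blk0.
Qed.

Lemma card_nondegenerate :
  #|[set E : {set T1 * T2} | nondegenerate E]| =
    \sum_(A : {set T1}) \sum_(B : {set T2}) #|[set E : {set T1 * T2} | tangle_block E A B]|
    + ((#|T1| == 0) && (#|T2| == 0)).
Proof.
case: (boolP ((#|T1| == 0) && (#|T2| == 0))) => [/andP[/eqP T1_0 /eqP T2_0] | inhabited].
  rewrite big1 => [|A _]; last first.
    rewrite big1 // => B _; apply: eq_card0 => E; rewrite !inE; apply/negP => /andP[_].
    by case/and4P; rewrite (leqNgt 2) (leq_ltn_trans (max_card A)) // T1_0.
  have -> : [set E : {set T1 * T2} | nondegenerate E] = setT.
    apply/setP => E; rewrite !inE; apply/andP; split; apply/forallP => x.
      by case: (fintype0 x T1_0).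
    by case: (fintype0 x T2_0).
  by rewrite cardsT card_sets card_prod T1_0 T2_0.
rewrite addn0 -sum_nat_of_bool -(eq_bigr _ (fun E _ => sum_tangle_blocks E _)); last first.
  by rewrite !lt0n -negb_and.
rewrite exchange_big; apply: eq_bigr => A _; rewrite exchange_big; apply: eq_bigr => B _.
exact: sum_nat_of_bool.
Qed.

Lemma tangle_count_identity :
  \sum_(A : {set T1}) \sum_(B : {set T2}) tau #|A| #|B| * 2 ^ (#|~: A| * #|~: B|)
    + 2 ^ (#|T1| * #|T2|) + ((#|T1| == 0) && (#|T2| == 0))
  = (2 ^ #|T2| - 1) ^ #|T1| + (2 ^ #|T1| - 1) ^ #|T2|.
Proof.
rewrite -card_nbhd1_neq0 -card_nbhd2_neqT -cardsUI.
set S1 := [set E : {set T1 * T2} | _]; set S2 := [set E : {set T1 * T2} | _].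
have -> : S1 :|: S2 = setT.
  apply/setP => E; rewrite !inE; apply/negPn/negP.
  case/norP => /forallPn[u /negPn/eqP nbhd1_0] /forallPn[w /negPn/eqP nbhd2_T].
  by have := in_setT u; rewrite -nbhd2_T in_nbhd2 -in_nbhd1 nbhd1_0 inE.
have -> : S1 :&: S2 = [set E : {set T1 * T2} | nondegenerate E].
  by apply/setP => E; rewrite !inE.
rewrite card_nondegenerate cardsT card_sets card_prod.
under [in RHS]eq_bigr => A _ do under eq_bigr => B _ do rewrite card_tangle_blocks.
by rewrite addnCA addnA.
Qed.

End Counting.

(** * Exponential generating functions *)

Local Open Scope ring_scope.

Definition egf (c : nat -> nat -> rat) : series := fun i j => c i j / (i`! * j`!)%:R.

Definition bconv (c d : nat -> nat -> rat) (i j : nat) : rat :=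
  \sum_(k < i.+1) \sum_(l < j.+1) 'C(i, k)%:R * 'C(j, l)%:R * (c k l * d (i - k)%N (j - l)%N).

Lemma fact_neq0 n : n`!%:R != 0 :> rat.
Proof. by rewrite pnatr_eq0 -lt0n fact_gt0. Qed.

Lemma natr_bin i k : (k <= i)%N -> 'C(i, k)%:R = i`!%:R / (k`!%:R * (i - k)`!%:R) :> rat.
Proof.
move=> le_ki; rewrite -(bin_fact le_ki) !natrM.
by field; rewrite !fact_neq0.
Qed.

Lemma smul_egf F G c d : F =2 egf c -> G =2 egf d -> smul F G =2 egf (bconv c d).
Proof.
move=> Fc Gd i j; rewrite /smul /egf /bconv mulr_suml; apply: eq_bigr => -[k /= lt_ki] _.
rewrite mulr_suml; apply: eq_bigr => -[l /= lt_lj] _.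
rewrite Fc Gd /egf !natr_bin -1?ltnS // !natrM.
by field; rewrite !fact_neq0.
Qed.

Lemma bconvC c d i j : bconv c d i j = bconv d c i j.
Proof.
rewrite /bconv (reindex_inj rev_ord_inj); apply: eq_bigr => k _.
rewrite (reindex_inj rev_ord_inj); apply: eq_bigr => l _ /=.
have le_ki : (k <= i)%N by rewrite -ltnS.
have le_lj : (l <= j)%N by rewrite -ltnS.
by rewrite !subSS !subKn // !bin_sub // [c _ _ * _]mulrC.
Qed.

Lemma bconv_swap c d c' d' i j :
  (forall k l, c' k l = c l k) -> (forall k l, d' k l = d l k) ->
  bconv c d i j = bconv c' d' j i.
Proof.
move=> c'E d'E; rewrite /bconv exchange_big; apply: eq_bigr => l _; apply: eq_bigr => k _.
by rewrite c'E d'E [_%:R * _%:R]mulrC.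
Qed.

Lemma bconvDr c d d' i j :
  bconv c (fun k l => d k l + d' k l) i j = bconv c d i j + bconv c d' i j.
Proof.
rewrite /bconv -big_split; apply: eq_bigr => k _.
by rewrite -big_split; apply: eq_bigr => l _; rewrite !mulrDr.
Qed.

Lemma bconvNr c d i j : bconv c (fun k l => - d k l) i j = - bconv c d i j.
Proof.
rewrite /bconv -sumrN; apply: eq_bigr => k _.
by rewrite -sumrN; apply: eq_bigr => l _; rewrite !mulrN.
Qed.

Lemma bconv_sone c i j : bconv c sone i j = c i j.
Proof.
rewrite /bconv big_ord_recr big1 => [|k _] /=.
  rewrite big_ord_recr big1 => [|l _] /=.
    by rewrite /sone !subnn !binn /= !add0r !mul1r mulr1.
  by rewrite /sone subnn /= subn_eq0 leqNgt ltn_ord !mulr0.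
by rewrite big1 // => l _; rewrite /sone subn_eq0 leqNgt ltn_ord !mulr0.
Qed.

Lemma bconv_pow2_exp_negx i j :
  bconv (fun k l => 2 ^+ (k * l)) (fun k l => if l == 0%N then (-1) ^+ k else 0) i j =
  (2 ^+ j - 1) ^+ i.
Proof.
rewrite addrC exprDn /bconv; apply: eq_bigr => k _.
rewrite big_ord_recr big1 => [|l _] /=; last by rewrite subn_eq0 leqNgt ltn_ord !mulr0.
by rewrite subnn binn add0r mulr1 -[RHS]mulr_natl mulnC exprM [_ * (-1) ^+ _]mulrC.
Qed.

Lemma tangle_count_identity_ord i j :
  (\sum_(k < i.+1) \sum_(l < j.+1) 'C(i, k) * 'C(j, l) * (tau k l * 2 ^ ((i - k) * (j - l)))
    + 2 ^ (i * j) + ((i == 0) && (j == 0)) = (2 ^ j - 1) ^ i + (2 ^ i - 1) ^ j)%N.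
Proof.
have := tangle_count_identity 'I_i 'I_j; rewrite !card_ord => <-.
congr (_ + _ + _)%N; apply/esym.
under eq_bigr => A _ do under eq_bigr => B _ do rewrite !cardsC_ord.
under eq_bigr => A _ do
  rewrite (sum_set_card _ (fun l => tau #|A| l * 2 ^ ((i - #|A|) * (j - l))))%N.
rewrite (sum_set_card _
  (fun k => \sum_(l < _) 'C(_, l) * (tau k l * 2 ^ ((i - k) * (j - l)))))%N.
rewrite !card_ord; apply: eq_bigr => k _; rewrite big_distrr /=.
by apply: eq_bigr => l _; rewrite mulnA.
Qed.

Lemma bconv_tangle_identity i j :
  bconv (fun k l => 2 ^+ (k * l)) (fun k l => (tau k l)%:R) i j + 2 ^+ (i * j) + sone i j
  = (2 ^+ j - 1) ^+ i + (2 ^+ i - 1) ^+ j.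
Proof.
have := congr1 (fun n => n%:R : rat) (tangle_count_identity_ord i j).
rewrite /= !natrD !natrX !natrB ?expn_gt0 // !natrX => <-; congr (_ + _ + _).
  rewrite bconvC natr_sum; apply: eq_bigr => k _; rewrite natr_sum; apply: eq_bigr => l _.
  by rewrite !natrM natrX.
by rewrite /sone; case: (_ && _).
Qed.

Lemma smul_linv_unique F S S' :
  F 0%N 0%N = 1 -> (forall i j, smul F S i j = sone i j) ->
  (forall i j, smul F S' i j = sone i j) -> forall i j, S i j = S' i j.
Proof.
move=> F00 FS FS'.
have smulE G i j : smul F G i j = G i j + \sum_(a < i.+1) \sum_(b < j.+1)
    (if (a == 0%N :> nat) && (b == 0%N :> nat) then 0 else F a b * G (i - a)%N (j - b)%N).
  rewrite /smul (big_ord_recl i) (big_ord_recl j) [in RHS](big_ord_recl i).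
  by rewrite [in RHS](big_ord_recl j) /= add0r F00 mul1r !subn0 addrA.
suff eqSS' n i j : (i + j < n)%N -> S i j = S' i j by move=> i j; apply: (eqSS' (i + j).+1).
elim: n i j => [//|n IHn] i j ltn; have := FS i j; rewrite -(FS' i j) !smulE.
set r := \sum_(a < _) _; set r' := \sum_(a < _) _.
suff -> : r = r' by move/addIr.
apply: eq_bigr => a _; apply: eq_bigr => b _.
case: ifP => // /nandP a_or_b_neq0; congr (_ * _); apply: IHn.
by have := ltn_ord a; have := ltn_ord b; case: a_or_b_neq0 => /negP; lia.
Qed.

Lemma smul_B_lbl_inverse i j :
  smul B_lbl (fun a b => exp_negx a b + exp_negy a b - sone a b - T_lbl a b) i j = sone i j.
Proof.
pose pow2 k l : rat := 2 ^+ (k * l).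
pose cx k l : rat := if l == 0%N then (-1) ^+ k else 0.
pose cy k l : rat := if k == 0%N then (-1) ^+ l else 0.
pose ct k l : rat := (tau k l)%:R.
have B_egf : B_lbl =2 egf pow2 by move=> k l; rewrite /B_lbl /egf natrX.
have S_egf : (fun a b => exp_negx a b + exp_negy a b - sone a b - T_lbl a b) =2
             egf (fun k l => cx k l + cy k l - sone k l - ct k l).
  move=> k l; rewrite /egf !mulrBl mulrDl /exp_negx /exp_negy /sone /T_lbl /cx /cy /ct.
  by case: k => [|k]; case: l => [|l]; rewrite /= ?expr0 ?fact0 ?muln1 ?mul1n ?mul0r ?divr1.
rewrite (smul_egf B_egf S_egf) /egf bconvDr bconvNr bconvDr bconvNr bconvDr bconv_sone.
rewrite bconv_pow2_exp_negx (@bconv_swap _ _ pow2 cx) => [|k l|k l]; last 2 first.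
- by rewrite /pow2 mulnC.
- by [].
rewrite bconv_pow2_exp_negx -bconv_tangle_identity.
have -> : forall x y z : rat, x + y + z - y - x = z by move=> x y z; ring.
by rewrite /sone; case: i => [|i]; case: j => [|j]; rewrite /= ?mul0r ?divr1.
Qed.

Theorem theorem4p3 :
  (exists S : series, forall i j, smul B_lbl S i j = sone i j) /\
  (forall S : series, (forall i j, smul B_lbl S i j = sone i j) ->
     forall i j, T_lbl i j = exp_negx i j + exp_negy i j - sone i j - S i j).
Proof.
have B00 : B_lbl 0%N 0%N = 1 by rewrite /B_lbl /= divr1.
split; first by eexists; exact: smul_B_lbl_inverse.
move=> S BS i j; rewrite -(smul_linv_unique B00 smul_B_lbl_inverse BS i j).
by ring.
Qed.
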